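(* Let $\mathcal S\subseteq\mathbb R^n$ be a convex set whose recession cone $\mathbf K:=\mathrm{rec.cone}(\mathcal S)$ is regular, and let $\Psi:=\Psi_{\mathbf K,\|\cdot\|_2}$. Then for every $\hat x\in\mathcal S$, $$\inf_{x\in\mathcal S\cap\mathbb Z^n}\|x-\hat x\|_2\le \frac{\sqrt n}{2}\Big(\frac1{\Psi}+1\Big),$$ and in fact there exists $x\in\mathcal S\cap\mathbb Z^n$ attaining $\|x-\hat x\|_2\le\frac{\sqrt n}{2}(\frac1\Psi+1)$. Moreover, if $\alpha\in\mathbb R^n$ and $\hat z:=\inf\{\alpha^Tx:x\in\mathcal S\}>-\infty$, then $$\inf\{\alpha^Tx:x\in\mathcal S\cap\mathbb Z^n\}-\hat z\le\|\alpha\|_2\frac{\sqrt n}{2}\Big(\frac1{\Psi}+1\Big).$$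
   Context: The recession cone of a convex set $\mathcal S$ is $\mathrm{rec.cone}(\mathcal S)=\{d: x+\lambda d\in\mathcal S\ \forall\lambda\ge0,\ \forall x\in\mathcal S\}$. A cone is regular if it is full-dimensional, closed, convex and pointed. For a regular cone $\mathbf K$ with dual cone $\mathbf K_*=\{x: x^Ty\ge0\ \forall y\in\mathbf K\}$, $\Psi_{\mathbf K,\|\cdot\|_2}:=\max_{d\in\mathbf K,\|d\|_2=1}\min_{f\in\mathbf K_*,\|f\|_2=1}f^Td$. *)

From HB Require Import structures.
From mathcomp Require Import all_boot all_order all_algebra.
From mathcomp Require Import all_classical all_reals all_analysis.
Set Implicit Arguments. Unset Strict Implicit. Unset Printing Implicit Defensive.
Import Order.TTheory GRing.Theory Num.Theory.
Import numFieldTopology.Exports numFieldNormedType.Exports.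
Local Open Scope classical_set_scope.
Local Open Scope ring_scope.

Section Defs.
Variables (R : realType) (n : nat).
Implicit Types (S K : set 'rV[R]_n) (x y d : 'rV[R]_n).

Definition dotp x y : R := \sum_(i < n) x 0 i * y 0 i.
Definition norm2 x : R := Num.sqrt (dotp x x).

Definition convexS S : Prop :=
  forall x y t, S x -> S y -> 0 <= t -> t <= 1 -> S (t *: x + (1 - t) *: y).

Definition int_vec x : Prop := forall i, x 0 i \is a Num.int.

Definition rec_cone S : set 'rV[R]_n :=
  [set d | forall x (l : R), S x -> 0 <= l -> S (x + l *: d)].

Definition is_cone K : Prop := forall x (l : R), K x -> 0 <= l -> K (l *: x).

Definition full_dim K : Prop :=
  exists x (r : R), 0 < r /\ forall y, norm2 (y - x) < r -> K y.
Definition pointed K : Prop := forall x, K x -> K (- x) -> x = 0.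
Definition regular_cone K : Prop :=
  [/\ is_cone K, full_dim K, closed K, convexS K & pointed K].

Definition dual_cone K : set 'rV[R]_n := [set f | forall y, K y -> 0 <= dotp f y].

Definition Psi K : R :=
  sup [set inf [set dotp f d | f in [set f | dual_cone K f /\ norm2 f = 1]]
      | d in [set d | K d /\ norm2 d = 1]].

End Defs.

(* Write K for the recession cone and g(d) (dual_margin K d) for the least
   value of f.d over the unit vectors f of the dual cone, so that Psi is the
   supremum of g over the unit vectors of K. A point y with |y - d| <= g(d)
   lies in K: otherwise some unit dual vector f separates y from K, and
   f.y < 0 <= f.d - |y - d|. Since g is 1-Lipschitz and K has interior, g
   attains Psi > 0 at a unit vector d of K. Rounding c = xh + t d with
   t = sqrt n / (2 Psi) coordinatewise moves c by at most sqrt n / 2 = t Psi,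
   so the integer point z obtained satisfies z - xh in t ball(d, Psi), a
   subset of K; hence z lies in S and |z - xh| <= sqrt n / 2 + t. The
   objective bound follows by Cauchy-Schwarz. *)
From HB Require Import structures.
From mathcomp Require Import all_boot all_order all_algebra.
From mathcomp Require Import all_classical all_reals all_analysis.
From mathcomp Require Import ring lra.
Import Order.TTheory GRing.Theory Num.Theory.
Import numFieldTopology.Exports numFieldNormedType.Exports.
Local Open Scope classical_set_scope.
Local Open Scope ring_scope.
Set Implicit Arguments. Unset Strict Implicit. Unset Printing Implicit Defensive.

Section Euclidean.
Variables (R : realType) (n : nat).
Implicit Types (x y z f k : 'rV[R]_n) (A : set 'rV[R]_n).

Lemma dotpC x y : dotp x y = dotp y x.
Proof. by apply: eq_bigr => i _; rewrite mulrC. Qed.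

Lemma dotpDl x y z : dotp (x + y) z = dotp x z + dotp y z.
Proof. by rewrite /dotp -big_split; apply: eq_bigr => i _; rewrite !mxE mulrDl. Qed.

Lemma dotpZl (a : R) x y : dotp (a *: x) y = a * dotp x y.
Proof. by rewrite /dotp mulr_sumr; apply: eq_bigr => i _; rewrite !mxE mulrA. Qed.

Lemma dotpNl x y : dotp (- x) y = - dotp x y.
Proof. by rewrite -scaleN1r dotpZl mulN1r. Qed.

Lemma dotpBl x y z : dotp (x - y) z = dotp x z - dotp y z.
Proof. by rewrite dotpDl dotpNl. Qed.

Lemma dotpDr x y z : dotp z (x + y) = dotp z x + dotp z y.
Proof. by rewrite !(dotpC z) dotpDl. Qed.

Lemma dotpZr (a : R) x y : dotp y (a *: x) = a * dotp y x.
Proof. by rewrite !(dotpC y) dotpZl. Qed.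

Lemma dotpNr x y : dotp y (- x) = - dotp y x.
Proof. by rewrite !(dotpC y) dotpNl. Qed.

Lemma dotpBr x y z : dotp z (x - y) = dotp z x - dotp z y.
Proof. by rewrite dotpDr dotpNr. Qed.

Lemma dotp0l x : dotp 0 x = 0.
Proof. by rewrite /dotp big1 // => i _; rewrite mxE mul0r. Qed.

Lemma dotp0r x : dotp x 0 = 0.
Proof. by rewrite dotpC dotp0l. Qed.

Lemma dotp_ge0 x : 0 <= dotp x x.
Proof. by apply: sumr_ge0 => i _; rewrite -expr2 sqr_ge0. Qed.

Lemma coord_sqr_le_dotp x i : x 0 i ^+ 2 <= dotp x x.
Proof.
rewrite /dotp (bigD1 i) //= -expr2 lerDl; apply: sumr_ge0 => j _.
by rewrite -expr2 sqr_ge0.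
Qed.

Lemma dotp_eq0 x : dotp x x = 0 -> x = 0.
Proof.
move=> x0; apply/rowP => i; rewrite mxE.
have := coord_sqr_le_dotp x i; rewrite x0 => xi_le0.
by apply/eqP; rewrite -sqrf_eq0 eq_le xi_le0 sqr_ge0.
Qed.

Lemma dotpDZ_self f k (t : R) :
  dotp (f + t *: k) (f + t *: k) = dotp f f + t * (2 * dotp f k + t * dotp k k).
Proof. by rewrite dotpDl !dotpDr !dotpZl !dotpZr (dotpC k f); ring. Qed.

Lemma norm2_ge0 x : 0 <= norm2 x.
Proof. exact: sqrtr_ge0. Qed.

Lemma norm2_sqr x : norm2 x ^+ 2 = dotp x x.
Proof. by rewrite /norm2 sqr_sqrtr // dotp_ge0. Qed.

Lemma norm2Z (a : R) x : norm2 (a *: x) = `|a| * norm2 x.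
Proof.
rewrite /norm2 dotpZl dotpZr mulrA sqrtrM; last by rewrite -expr2 sqr_ge0.
by rewrite -expr2 sqrtr_sqr.
Qed.

Lemma norm20 : norm2 (0 : 'rV[R]_n) = 0.
Proof. by rewrite /norm2 dotp0l sqrtr0. Qed.

Lemma norm2N x : norm2 (- x) = norm2 x.
Proof. by rewrite -scaleN1r norm2Z normrN normr1 mul1r. Qed.

Lemma norm2_subC x y : norm2 (x - y) = norm2 (y - x).
Proof. by rewrite -norm2N opprB. Qed.

Lemma norm2_gt0 x : x != 0 -> 0 < norm2 x.
Proof.
move=> x0; rewrite lt_def norm2_ge0 andbT; apply: contraNneq x0 => nx0.
by apply/eqP/dotp_eq0; rewrite -norm2_sqr nx0 expr0n.
Qed.

Lemma norm2_normalize x : x != 0 -> norm2 ((norm2 x)^-1 *: x) = 1.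
Proof. by move=> /norm2_gt0 ?; rewrite norm2Z gtr0_norm ?invr_gt0 // mulVf ?gt_eqF. Qed.

Lemma cauchy_schwarz_sqr x y : dotp x y ^+ 2 <= dotp x x * dotp y y.
Proof.
have [y0|yn0] := eqVneq (dotp y y) 0.
  by rewrite (dotp_eq0 y0) !dotp0r expr0n /= mulr0.
have ypos : 0 < dotp y y by rewrite lt_def yn0 dotp_ge0.
(* expand 0 <= |x - t y|^2 at the minimizing t *)
set t := dotp x y / dotp y y.
have := dotp_ge0 (x - t *: y).
rewrite dotpBl !dotpBr !dotpZl !dotpZr (dotpC y x).
have -> : t * dotp x y - t * (t * dotp y y) = 0 by rewrite /t; field.
rewrite subr0 subr_ge0 -(ler_pM2r ypos).
have -> : t * dotp x y * dotp y y = dotp x y ^+ 2 by rewrite /t; field.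
done.
Qed.

Lemma normr_dotp_le x y : `|dotp x y| <= norm2 x * norm2 y.
Proof.
rewrite -(sqrtr_sqr (dotp x y)) /norm2 -sqrtrM ?dotp_ge0 //.
exact/ler_wsqrtr/cauchy_schwarz_sqr.
Qed.

Lemma dotp_le_norm2 x y : dotp x y <= norm2 x * norm2 y.
Proof. exact: le_trans (ler_norm _) (normr_dotp_le _ _). Qed.

Lemma norm2D_le x y : norm2 (x + y) <= norm2 x + norm2 y.
Proof.
rewrite -(ler_pXn2r (_ : 0 < 2)%N) ?nnegrE ?addr_ge0 ?norm2_ge0 //.
rewrite norm2_sqr sqrrD !norm2_sqr dotpDl !dotpDr (dotpC y x).
have := dotp_le_norm2 x y; lra.
Qed.

Lemma norm2B_ge x y : norm2 x - norm2 y <= norm2 (x - y).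
Proof. by rewrite lerBlDr; have := norm2D_le (x - y) y; rewrite subrK. Qed.

Lemma mx_norm_le_norm2 x : `|x| <= norm2 x.
Proof.
rewrite (_ : `|x| = mx_norm x) // mx_normrE.
apply: bigmax_le; first exact: norm2_ge0.
move=> [i j] _ /=; rewrite (ord1 i) -(sqrtr_sqr (x 0 j)) /norm2.
exact/ler_wsqrtr/coord_sqr_le_dotp.
Qed.

Lemma coord_le_mx_norm x i : `|x 0 i| <= `|x|.
Proof.
rewrite (_ : `|x| = mx_norm x) // mx_normrE.
by apply/bigmax_geP; right; exists (ord0, i).
Qed.

Lemma norm2_le_mx_norm x : norm2 x <= Num.sqrt n%:R * `|x|.
Proof.
rewrite -[X in _ * X]normr_id -(sqrtr_sqr `|x|) -sqrtrM ?ler0n // /norm2.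
apply: ler_wsqrtr; rewrite /dotp -[n in n%:R]card_ord -sum1_card natr_sum mulr_suml.
apply: ler_sum => i _; rewrite mul1r -expr2 -real_normK ?num_real //.
by rewrite lerXn2r ?nnegrE ?normr_ge0 // ?coord_le_mx_norm // normr_id.
Qed.

Lemma norm2_lipschitz_continuous (h : 'rV[R]_n -> R) :
  (forall a b, h a - h b <= norm2 (a - b)) -> continuous h.
Proof.
move=> hlip x; apply/(@cvgrPdist_le _ _ _ (nbhs x) (nbhs_filter x)) => e e0.
have C0 : 0 < Num.sqrt n%:R + 1 :> R by rewrite ltr_wpDl ?sqrtr_ge0.
have := nbhsx_ballx x (e / (Num.sqrt n%:R + 1)) (divr_gt0 e0 C0).
apply: filterS => y /=; rewrite mx_norm_ball /ball_ /= => xy_small.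
have : `|h x - h y| <= norm2 (x - y).
  by rewrite ler_norml hlip andbT lerNl opprB norm2_subC hlip.
move/le_trans; apply; apply: le_trans (norm2_le_mx_norm _) _.
rewrite ltr_pdivlMr // in xy_small; apply: le_trans (ltW xy_small).
by rewrite mulrC ler_wpM2l ?normr_ge0 // lerDl.
Qed.

Lemma continuous_norm2_sub c : continuous (fun x => norm2 (x - c)).
Proof.
apply: norm2_lipschitz_continuous => a b.
by have := norm2B_ge (a - c) (b - c); rewrite opprB addrA subrK.
Qed.

Lemma continuous_norm2 : continuous (@norm2 R n).
Proof. exact/norm2_lipschitz_continuous/norm2B_ge. Qed.

Lemma norm2_bounded_compact A (M : R) :
  closed A -> (forall x, A x -> norm2 x <= M) -> compact A.
Proof.
move=> Acl AM; apply: bounded_closed_compact => //.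
exists M; split; first exact: num_real.
move=> N MN x Ax; apply: le_trans (mx_norm_le_norm2 _) _.
exact: le_trans (AM _ Ax) (ltW MN).
Qed.

Lemma closed_nearest_point A y : closed A -> A !=set0 ->
  exists2 p, A p & forall k, A k -> norm2 (p - y) <= norm2 (k - y).
Proof.
move=> Acl [a Aa].
set B := A `&` (fun z => norm2 (z - y)) @^-1` [set r | r <= norm2 (a - y)].
have Bcl : closed B.
  apply: closedI => //; apply: preimage_closed; last exact: closed_le.
  by move=> z _; apply: continuous_norm2_sub.
have Bcpt : compact B.
  apply: (norm2_bounded_compact (M := norm2 (a - y) + norm2 y)) => // z [_ /= zy].
  have := norm2D_le (z - y) y; rewrite subrK => /le_trans; apply.
  by rewrite lerD2r.
have [p pB pmin] := EVT_min_rV (ex_intro _ a (conj Aa (lexx _))) Bcpt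
  (continuous_subspaceT (@continuous_norm2_sub y)).
move: pB; rewrite inE => -[Ap /= pa]; exists p => // k Ak.
have [ka|/ltW ak] := leP (norm2 (k - y)) (norm2 (a - y)); last exact: le_trans pa ak.
by apply: pmin; rewrite inE.
Qed.

Lemma ge0_small_perturbation (a b : R) : 0 <= b ->
  (forall t, 0 < t -> t <= 1 -> 0 <= a + t * b) -> 0 <= a.
Proof.
move=> b0 hab; rewrite leNgt; apply/negP => a0.
have ba : 0 < b - a by lra.
have t0 : 0 < - a / (b - a) by rewrite divr_gt0 // oppr_gt0.
have t1 : - a / (b - a) <= 1 by rewrite ler_pdivrMr // mul1r; lra.
have := hab _ t0 t1.
have -> : a + - a / (b - a) * b = - (a ^+ 2) / (b - a) by field; rewrite gt_eqF.
rewrite pmulr_lge0 ?invr_gt0 // oppr_ge0 => a2.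
have : 0 < a ^+ 2 by rewrite exprn_even_gt0 //= lt_eqF.
lra.
Qed.

Lemma nearest_point_dotp_ge0 A y p v :
  (forall k, A k -> norm2 (p - y) <= norm2 (k - y)) ->
  (forall t, 0 < t -> t <= 1 -> A (p + t *: v)) -> 0 <= dotp (p - y) v.
Proof.
move=> pmin Av; rewrite -(pmulr_rge0 _ (ltr0Sn R 1)).
apply: (ge0_small_perturbation (dotp_ge0 v)) => t t0 t1.
have := pmin _ (Av _ t0 t1).
rewrite -(ler_pXn2r (_ : 0 < 2)%N) ?nnegrE ?norm2_ge0 // !norm2_sqr.
by rewrite addrAC dotpDZ_self lerDl pmulr_rge0.
Qed.

Lemma round_int (x : R) : exists r : R, r \is a Num.int /\ `|r - x| <= 2^-1.
Proof.
exists (Num.floor (x + 2^-1))%:~R; split; first exact: intr_int.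
have := floor_le (x + 2^-1); have := floorD1_gt (x + 2^-1).
rewrite intrD ler_norml; lra.
Qed.

Lemma round_int_vec c : exists z, int_vec z /\ norm2 (z - c) <= Num.sqrt n%:R / 2.
Proof.
have [r hr] := choice (fun i => round_int (c 0 i)).
exists (\row_i r i); split; first by move=> i; rewrite mxE; case: (hr i).
rewrite -(ler_pXn2r (_ : 0 < 2)%N) ?nnegrE ?norm2_ge0 ?divr_ge0 ?sqrtr_ge0 //.
rewrite norm2_sqr expr_div_n sqr_sqrtr ?ler0n //.
rewrite /dotp -[n in n%:R]card_ord -sum1_card natr_sum mulr_suml.
apply: ler_sum => i _; rewrite !mxE -expr2 -real_normK ?num_real //.
have [_ ri] := hr i; rewrite mul1r -exprVn.
by rewrite lerXn2r ?nnegrE ?normr_ge0 ?invr_ge0 ?ler0n.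
Qed.

End Euclidean.

Section Cones.
Variables (R : realType) (n : nat).
Implicit Types (K : set 'rV[R]_n) (x y d f : 'rV[R]_n).

Definition unit_sphere K := [set x | K x /\ norm2 x = 1].

Definition dual_margin K d : R := inf [set dotp f d | f in unit_sphere (dual_cone K)].

Lemma PsiE K : Psi K = sup [set dual_margin K d | d in unit_sphere K].
Proof. by []. Qed.

Lemma dual_margin_le K d f : unit_sphere (dual_cone K) f -> dual_margin K d <= dotp f d.
Proof.
move=> Ff; apply: ge_inf; last by exists f.
exists (- norm2 d) => _ [g [_ g1] <-].
by have := normr_dotp_le g d; rewrite g1 mul1r ler_norml => /andP[].
Qed.

Lemma dual_margin_ge K d (c : R) : unit_sphere (dual_cone K) !=set0 ->
  (forall f, unit_sphere (dual_cone K) f -> c <= dotp f d) -> c <= dual_margin K d.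
Proof.
move=> [f Ff] cd; apply: lb_le_inf; first by exists (dotp f d), f.
by move=> _ [g Fg <-]; apply: cd.
Qed.

Lemma dual_margin_lipschitz K a b : unit_sphere (dual_cone K) !=set0 ->
  dual_margin K a - dual_margin K b <= norm2 (a - b).
Proof.
move=> F0; suff : dual_margin K a - norm2 (a - b) <= dual_margin K b by lra.
apply: dual_margin_ge => // f Ff.
have := dual_margin_le a Ff; have := dotp_le_norm2 f (a - b).
rewrite dotpBr (proj2 Ff) mul1r; lra.
Qed.

Lemma continuous_dual_margin K : unit_sphere (dual_cone K) !=set0 ->
  continuous (dual_margin K).
Proof.
by move=> F0; apply: norm2_lipschitz_continuous => a b; apply: dual_margin_lipschitz.
Qed.

Lemma cone_ball0_all K (r : R) : is_cone K -> 0 < r ->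
  (forall y, norm2 y < r -> K y) -> forall y, K y.
Proof.
move=> Kc r0 Kball y; have [->|y0] := eqVneq y 0; first by apply: Kball; rewrite norm20.
have ny := norm2_gt0 y0.
have -> : y = (2 * norm2 y / r) *: ((r / (2 * norm2 y)) *: y).
  by rewrite scalerA (_ : _ * _ = 1) ?scale1r //; field; rewrite !gt_eqF.
apply: Kc; last by rewrite ltW // divr_gt0 // mulr_gt0.
apply: Kball; rewrite norm2Z gtr0_norm ?divr_gt0 ?mulr_gt0 //.
have -> : r / (2 * norm2 y) * norm2 y = r / 2 by field; rewrite gt_eqF.
lra.
Qed.

Section ClosedConvexCone.
Variable K : set 'rV[R]_n.
Hypotheses (Kcl : closed K) (K0 : K 0).
Hypotheses (KD : forall a b, K a -> K b -> K (a + b)) (Kc : is_cone K).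

Lemma dual_separation y : ~ K y -> exists2 f, dual_cone K f & dotp f y < 0.
Proof.
move=> Ky; have [p Kp pmin] := closed_nearest_point y Kcl (ex_intro _ 0 K0).
exists (p - y).
  move=> k Kk; apply: (nearest_point_dotp_ge0 pmin) => t t0 _.
  by apply: KD => //; apply: Kc => //; apply: ltW.
have fp : dotp (p - y) p <= 0.
  rewrite -oppr_ge0 -dotpNr; apply: (nearest_point_dotp_ge0 pmin) => t _ t1.
  by rewrite scalerN -{1}(scale1r p) -scalerBl; apply: Kc => //; rewrite subr_ge0.
have f0 : p - y != 0.
  by apply/eqP => /eqP; rewrite subr_eq0 => /eqP yp; apply: Ky; rewrite -yp.
have ff : 0 < dotp (p - y) (p - y) by rewrite -norm2_sqr exprn_gt0 // norm2_gt0.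
have -> : dotp (p - y) y = dotp (p - y) p - dotp (p - y) (p - y).
  by rewrite [in RHS]dotpBr opprB addrCA subrr addr0.
lra.
Qed.

Lemma unit_dual_separation y : ~ K y ->
  exists2 f, unit_sphere (dual_cone K) f & dotp f y < 0.
Proof.
move=> /dual_separation [f fK fy].
have f0 : f != 0 by apply: contraTneq fy => ->; rewrite dotp0l ltxx.
exists ((norm2 f)^-1 *: f); last by rewrite dotpZl pmulr_rlt0 ?invr_gt0 ?norm2_gt0.
split; last exact: norm2_normalize.
by move=> k Kk; rewrite dotpZl mulr_ge0 ?invr_ge0 ?norm2_ge0 ?fK.
Qed.

Lemma ball_sub_cone d y : norm2 (y - d) <= dual_margin K d -> K y.
Proof.
move=> yd; apply: contrapT => /unit_dual_separation [f Ff fy].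
have := dual_margin_le d Ff; have := dotp_le_norm2 f (d - y).
rewrite (proj2 Ff) mul1r norm2_subC dotpBr; lra.
Qed.

Lemma lattice_point_in_cone_shift d (rho : R) x : (0 < n)%N ->
  norm2 d = 1 -> 0 < rho -> rho <= dual_margin K d ->
  exists z, [/\ int_vec z, K (z - x) &
    norm2 (z - x) <= Num.sqrt n%:R / 2 * (rho^-1 + 1)].
Proof.
move=> n_gt0 d1 rho0 rho_le.
have sn : 0 < Num.sqrt (n%:R : R) by rewrite sqrtr_gt0 ltr0n.
set t := Num.sqrt n%:R / (2 * rho).
have t0 : 0 < t by rewrite divr_gt0 // mulr_gt0.
have [z [zint zc]] := round_int_vec (x + t *: d).
have zxE : z - x = (z - (x + t *: d)) + t *: d by rewrite opprD addrA subrK.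
exists z; split => //.
  have -> : z - x = t *: (t^-1 *: (z - x)) by rewrite scalerA mulfV ?scale1r ?gt_eqF.
  apply: Kc; last exact: ltW.
  apply: ball_sub_cone; apply: le_trans rho_le.
  rewrite zxE scalerDr scalerA mulVf ?gt_eqF // scale1r addrK.
  rewrite norm2Z gtr0_norm ?invr_gt0 //.
  have -> : rho = t^-1 * (Num.sqrt n%:R / 2) by rewrite /t; field; rewrite !gt_eqF.
  by rewrite ler_pM2l ?invr_gt0.
rewrite zxE; apply: le_trans (norm2D_le _ _) _.
rewrite norm2Z d1 mulr1 gtr0_norm //.
have -> : Num.sqrt n%:R / 2 * (rho^-1 + 1) = Num.sqrt n%:R / 2 + t.
  by rewrite /t; field; rewrite gt_eqF.
by rewrite lerD2r.
Qed.

End ClosedConvexCone.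

Section RegularCone.
Variable K : set 'rV[R]_n.
Hypothesis Kreg : regular_cone K.

Lemma regular_cone0 : K 0.
Proof.
have [Kc [x0 [r [r0 Kball]]] _ _ _] := Kreg.
rewrite -(scale0r x0); apply: Kc => //; apply: Kball.
by rewrite subrr norm20.
Qed.

Lemma regular_coneD a b : K a -> K b -> K (a + b).
Proof.
have [Kc _ _ Kcv _] := Kreg; move=> Ka Kb.
have -> : a + b = 2 *: (2^-1 *: a + (1 - 2^-1) *: b).
  have -> : (1 - 2^-1 : R) = 2^-1 by field.
  by rewrite -scalerDr scalerA mulfV ?scale1r // pnatr_eq0.
apply: Kc; last exact: ler0n.
by apply: Kcv => //; rewrite ?invr_ge0 ?ler0n // invf_le1 ?ler1n.
Qed.

Hypothesis n_gt0 : (0 < n)%N.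

Lemma regular_cone_neqT : exists y, ~ K y.
Proof.
have [_ _ _ _ Kpt] := Kreg.
set e : 'rV[R]_n := const_mx 1.
have [Ke|] := pselect (K e); last by exists e.
have [Kne|] := pselect (K (- e)); last by exists (- e).
have := Kpt e Ke Kne => /rowP /(_ (Ordinal n_gt0)) /eqP.
by rewrite !mxE oner_eq0.
Qed.

Lemma unit_dual_neq0 : unit_sphere (dual_cone K) !=set0.
Proof.
have [Kc _ Kcl _ _] := Kreg; have [y Ky] := regular_cone_neqT.
have [f Ff _] := unit_dual_separation Kcl regular_cone0 regular_coneD Kc Ky.
by exists f.
Qed.

Lemma regular_cone_margin_gt0 : exists2 d, unit_sphere K d & 0 < dual_margin K d.
Proof.
have [Kc [x0 [r [r0 Kball]]] _ _ _] := Kreg.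
have x00 : x0 != 0.
  apply/eqP => x00; have [y] := regular_cone_neqT; apply.
  by apply: (cone_ball0_all Kc r0) => z zr; apply: Kball; rewrite x00 subr0.
have nx0 := norm2_gt0 x00.
exists ((norm2 x0)^-1 *: x0).
  split; last exact: norm2_normalize.
  by apply: Kc; [apply: Kball; rewrite subrr norm20 | rewrite invr_ge0 norm2_ge0].
apply: (@lt_le_trans _ _ (r / (2 * norm2 x0))); first by rewrite divr_gt0 ?mulr_gt0.
apply: dual_margin_ge; first exact: unit_dual_neq0.
move=> f [fK f1].
have : 0 <= dotp f (x0 - (r / 2) *: f).
  apply: fK; apply: Kball; rewrite addrAC subrr add0r norm2N norm2Z f1 mulr1.
  rewrite gtr0_norm ?divr_gt0 //; lra.
rewrite dotpBr dotpZr -norm2_sqr f1 expr1n mulr1 dotpZr => x0_ge.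
have -> : r / (2 * norm2 x0) = (norm2 x0)^-1 * (r / 2) by field; rewrite gt_eqF.
rewrite ler_pM2l ?invr_gt0 //; lra.
Qed.

Lemma Psi_attained : exists2 d, unit_sphere K d & 0 < Psi K <= dual_margin K d.
Proof.
have [_ _ Kcl _ _] := Kreg.
have [d0 Dd0 d0_gt0] := regular_cone_margin_gt0.
have Dcpt : compact (unit_sphere K).
  apply: (norm2_bounded_compact (M := 1)) => [|x [_ ->]] //.
  have : closed (K `&` (@norm2 R n) @^-1` [set x | x = 1]).
    apply: closedI => //; apply: preimage_closed; last exact: closed_eq.
    by move=> z _; apply: continuous_norm2.
  by [].
have [d Dd dmax] := EVT_max_rV (ex_intro _ d0 Dd0) Dcpt
  (continuous_subspaceT (continuous_dual_margin unit_dual_neq0)).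
move: Dd; rewrite inE => Dd; exists d => //.
have ub : ubound [set dual_margin K e | e in unit_sphere K] (dual_margin K d).
  by move=> _ [e De <-]; apply: dmax; rewrite inE.
rewrite PsiE; apply/andP; split.
  apply: lt_le_trans d0_gt0 _; apply: ub_le_sup; last by exists d0.
  by exists (dual_margin K d).
by apply: ge_sup => //; exists (dual_margin K d0), d0.
Qed.

End RegularCone.

End Cones.

Lemma rec_cone_lattice_point (R : realType) (n : nat) (S : set 'rV[R]_n) xh :
  regular_cone (rec_cone S) -> S xh ->
  exists x, [/\ S x, int_vec x &
    norm2 (x - xh) <= Num.sqrt n%:R / 2 * ((Psi (rec_cone S))^-1 + 1)].
Proof.
move=> Kreg Sxh; have [n0|n_gt0] := posnP n.
  exists xh; split => //; last by rewrite subrr norm20 [in n%:R]n0 sqrtr0 !mul0r.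
  by move=> i; have := ltn_ord i; rewrite [X in (_ < X)%N]n0.
have [Kc _ Kcl _ _] := Kreg.
have [d [_ d1] /andP[Psi_gt0 Psi_le]] := Psi_attained Kreg n_gt0.
have [z [zint Kz zxh]] := lattice_point_in_cone_shift Kcl (regular_cone0 Kreg)
  (regular_coneD Kreg) Kc xh n_gt0 d1 Psi_gt0 Psi_le.
exists z; split => //.
by have := Kz xh 1 Sxh ler01; rewrite scale1r addrC subrK.
Qed.

Lemma inf_dotp_gap (R : realType) (n : nat) (S T : set 'rV[R]_n) alpha (b : R) :
  T `<=` S -> S !=set0 -> has_lbound [set dotp alpha x | x in S] ->
  (forall xh, S xh -> exists2 x, T x & norm2 (x - xh) <= b) ->
  inf [set dotp alpha x | x in T] - inf [set dotp alpha x | x in S] <= norm2 alpha * b.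
Proof.
move=> TS [x0 Sx0] [l Sl] close; apply/ler_addgt0Pr => e e0.
have E0 : [set dotp alpha x | x in S] !=set0 by exists (dotp alpha x0), x0.
have [_ [xh Sxh <-] xh_lt] := inf_lt E0 (ltr_pwDr e0 (lexx _)).
have [z Tz zxh] := close xh Sxh.
have z_ge : inf [set dotp alpha x | x in T] <= dotp alpha z.
  apply: ge_inf; last by exists z.
  by exists l => _ [y Ty <-]; apply: Sl; exists y; first exact: TS.
have : dotp alpha z <= dotp alpha xh + norm2 alpha * b.
  rewrite -lerBlDl -dotpBr; apply: le_trans (dotp_le_norm2 _ _) _.
  by rewrite ler_wpM2l ?norm2_ge0.
lra.
Qed.

Theorem theorem4p2 (R : realType) (n : nat) (S : set 'rV[R]_n) :
  convexS S -> regular_cone (rec_cone S) ->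
  let bound := Num.sqrt n%:R / 2 * ((Psi (rec_cone S))^-1 + 1) in
  (forall xh, S xh ->
     inf [set norm2 (x - xh) | x in [set x | S x /\ int_vec x]] <= bound /\
     exists x, [/\ S x, int_vec x & norm2 (x - xh) <= bound]) /\
  (forall alpha : 'rV[R]_n,
     S !=set0 -> has_lbound [set dotp alpha x | x in S] ->
     inf [set dotp alpha x | x in [set x | S x /\ int_vec x]]
       - inf [set dotp alpha x | x in S] <= norm2 alpha * bound).
Proof.
move=> _ Kreg bound; have close := rec_cone_lattice_point Kreg.
split.
  move=> xh Sxh; have [x [Sx xint xxh]] := close xh Sxh.
  split; last by exists x.
  apply: le_trans xxh; apply: ge_inf; last by exists x.
  by exists 0 => _ [y _ <-]; apply: norm2_ge0.
move=> alpha S0 Slb; apply: inf_dotp_gap => //; first by move=> x [].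
by move=> xh /close[x [Sx xint xxh]]; exists x.
Qed.
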